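(* Consider the controlled adoption–opinion model and the MPC problem $\mathcal P(t)$ described in the context, with initial conditions $a(0),d(0),x(0)\in[0,1]^n$. Assume that $\mathcal P(0)$ is feasible. Then the MPC problem is recursively feasible: along the closed-loop trajectory obtained by applying, at each time $t$, the first element $u^*(0|t)$ of an optimal solution of $\mathcal P(t)$, the problem $\mathcal P(t)$ is feasible for all $t\ge0$.
   Context: Setting: $n\ge1$, $W,\tilde W\in\mathbb R_+^{n\times n}$, $\beta_i,\gamma_i,\theta_i,\delta_i\in[0,1]$, $\alpha_i,\lambda_i,\xi_i\ge0$ with $\alpha_i+\lambda_i+\xi_i=1$; $B,\Gamma,\Theta,\Delta,\Lambda,\Xi$ the diagonal matrices of $\beta,\gamma,\theta,\delta,\lambda,\xi$. The uncontrolled model on $(a,d,x)$ is $a(t+1)=a(t)+B\,\mathrm{diag}(x(t))\mathrm{diag}(\mathbf 1-a(t)-d(t))Wa(t)-\Delta a(t)$, $d(t+1)=d(t)-\Gamma\mathrm{diag}(x(t))d(t)+\Delta a(t)+\Theta(I-\mathrm{diag}(x(t)))(\mathbf 1-a(t)-d(t))$, $x(t+1)=(I-\Lambda-\Xi)x(0)+\Lambda\tilde Wx(t)+\Xi Wa(t)$. The controlled model, with input $u(t)\in\mathbb R^n$, is obtained by one fixed choice among: (opinion control) replacing the $x$-equation by $x(t+1)=(I-\Lambda-\Xi)(x(0)+u(t))+\Lambda\tilde Wx(t)+\Xi Wa(t)$; ($\beta$-control) replacing $\beta_i x_i(t)$ by $\beta_i x_i(t)(1+u_i(t))$; ($\delta$-control)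 replacing $\delta_i$ by $\delta_i(1-u_i(t))$. Write the controlled model as $(a,d,x)(k+1)=(F_1,F_2,F_3)(a(k),d(k),x(k),u(k))$. Fix a budget $C>0$, a horizon $N\ge1$ and weights $Q^a_i,Q^d_i,L_i$. Let $\bar u$ be the optimal constant control: a minimizer of $\sum_i[-Q^a_i(a^*_{c,i})^2+Q^d_i(d^*_{c,i})^2+L_iu_i^2]$ over constant controls $u$ with $\mathbf 1^\top u\le C$, $0\le u\le \mathbf 1-x(0)$ (entrywise), together with conditions guaranteeing $R^A_{0,\min}>1$ and asymptotic stability of an adoption-diffused equilibrium, where $(a_c^*,d_c^*,x_c^* )$ denotes the equilibrium of the controlled model under the constant input $\bar u$ (so $\bar u$ satisfies the budget and box constraints and $(a_c^*,d_c^*,x_c^* )$ is a fixed point of $(F_1,F_2,F_3)(\cdot,\cdot,\cdot,\bar u)$). The MPC problem $\mathcal P(t)$ at time $t$, given the current state $(a(t),d(t),x(t))$, is: minimize over $U(t)=\{u(0|t),\dots,u(N-1|t)\}$ the cost $\sum_{k=0}^{N-1}\sum_{i=1}^n[-Q^a_ia_i^2(k|t)+Q^d_id_i^2(k|t)+L_iu_i^2(k|t)]$ subject to $\mathbf 1^\top u(k|t)\le C$ and $0\le u(k|t)\le\mathbf 1-x(0)$ for $k=0,\dots,N-1$, $(a,d,x)(0|t)=(a(t),d(t),x(t))$, $(a,d,x)(k+1|t)=(F_1,F_2,F_3)(a(k|t),d(k|t),x(k|t),u(k|t))$, and terminal constraint $(a(N|t),d(N|t),x(N|t))=(a_c^*,d_c^*,x_c^*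 )$. $\mathcal P(t)$ is feasible if some $U(t)$ satisfies all these constraints. *)

From HB Require Import structures.
From mathcomp Require Import all_boot all_order all_algebra.
Set Implicit Arguments. Unset Strict Implicit. Unset Printing Implicit Defensive.
Import Order.TTheory GRing.Theory Num.Theory.
Local Open Scope ring_scope.

(* The three admissible ways of injecting the control input u(t). *)
Inductive control_kind := OpinionCtrl | BetaCtrl | DeltaCtrl.

(* Model parameters: vectors are column vectors 'cV[R]_n, entry i is v i 0. *)
Record params (R : realFieldType) (n : nat) := Params {
  p_beta : 'cV[R]_n; p_gamma : 'cV[R]_n; p_theta : 'cV[R]_n; p_delta : 'cV[R]_n;
  p_alpha : 'cV[R]_n; p_lambda : 'cV[R]_n; p_xi : 'cV[R]_n;
  p_W : 'M[R]_n; p_Wt : 'M[R]_n }.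

Definition in01 (R : realFieldType) (r : R) := 0 <= r <= 1.

Definition params_ok (R : realFieldType) n (p : params R n) : Prop :=
  (forall i j, 0 <= p_W p i j) /\ (forall i j, 0 <= p_Wt p i j) /\
  (forall i, in01 (p_beta p i 0) /\ in01 (p_gamma p i 0) /\
             in01 (p_theta p i 0) /\ in01 (p_delta p i 0)) /\
  (forall i, 0 <= p_alpha p i 0 /\ 0 <= p_lambda p i 0 /\ 0 <= p_xi p i 0 /\
             p_alpha p i 0 + p_lambda p i 0 + p_xi p i 0 = 1).

Definition state (R : realFieldType) n := ('cV[R]_n * 'cV[R]_n * 'cV[R]_n)%type.

(* One step (F1,F2,F3) of the controlled model; x0 is the initial opinion x(0). *)
Definition step (R : realFieldType) n (ck : control_kind) (p : params R n)
    (x0 : 'cV[R]_n) (s : state R n) (u : 'cV[R]_n) : state R n :=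
  let: (a, d, x) := s in
  let W := p_W p in
  let beta_eff := fun i : 'I_n => p_beta p i 0 * x i 0 *
        (if ck is BetaCtrl then 1 + u i 0 else 1) in
  let delta_eff := fun i : 'I_n => p_delta p i 0 *
        (if ck is DeltaCtrl then 1 - u i 0 else 1) in
  let a' := \col_i (a i 0 + beta_eff i * (1 - a i 0 - d i 0) * (W *m a) i 0
                    - delta_eff i * a i 0) in
  let d' := \col_i (d i 0 - p_gamma p i 0 * x i 0 * d i 0 + delta_eff i * a i 0
                    + p_theta p i 0 * (1 - x i 0) * (1 - a i 0 - d i 0)) in
  let x' := \col_i ((1 - p_lambda p i 0 - p_xi p i 0) *
                      (x0 i 0 + (if ck is OpinionCtrl then u i 0 else 0))
                    + p_lambda p i 0 * (p_Wt p *m x) i 0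
                    + p_xi p i 0 * (W *m a) i 0) in
  (a', d', x').

Fixpoint pred_traj (R : realFieldType) n (ck : control_kind) (p : params R n)
    (x0 : 'cV[R]_n) (s : state R n) (U : nat -> 'cV[R]_n) (k : nat) : state R n :=
  match k with
  | 0 => s
  | k'.+1 => step ck p x0 (pred_traj ck p x0 s U k') (U k')
  end.

Definition input_ok (R : realFieldType) n (C : R) (x0 u : 'cV[R]_n) : Prop :=
  \sum_i u i 0 <= C /\ (forall i, 0 <= u i 0 <= 1 - x0 i 0).

(* U = {u(0|t),...,u(N-1|t)} (only the first N entries of U matter) is
   admissible for P(t) from state s with terminal state s_star. *)
Definition mpc_admissible (R : realFieldType) n (ck : control_kind) (p : params R n)
    (x0 : 'cV[R]_n) (C : R) (N : nat) (s_star s : state R n)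
    (U : nat -> 'cV[R]_n) : Prop :=
  (forall k, (k < N)%N -> input_ok C x0 (U k)) /\
  pred_traj ck p x0 s U N = s_star.

Definition mpc_feasible (R : realFieldType) n (ck : control_kind) (p : params R n)
    (x0 : 'cV[R]_n) (C : R) (N : nat) (s_star s : state R n) : Prop :=
  exists U, mpc_admissible ck p x0 C N s_star s U.

Definition mpc_cost (R : realFieldType) n (ck : control_kind) (p : params R n)
    (x0 : 'cV[R]_n) (N : nat) (Qa Qd L : 'cV[R]_n) (s : state R n)
    (U : nat -> 'cV[R]_n) : R :=
  \sum_(k < N) \sum_(i < n)
    (let: (a, d, _) := pred_traj ck p x0 s U k in
     - Qa i 0 * (a i 0) ^+ 2 + Qd i 0 * (d i 0) ^+ 2 + L i 0 * (U k i 0) ^+ 2).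

Definition mpc_optimal (R : realFieldType) n (ck : control_kind) (p : params R n)
    (x0 : 'cV[R]_n) (C : R) (N : nat) (Qa Qd L : 'cV[R]_n) (s_star s : state R n)
    (U : nat -> 'cV[R]_n) : Prop :=
  mpc_admissible ck p x0 C N s_star s U /\
  forall V, mpc_admissible ck p x0 C N s_star s V ->
    mpc_cost ck p x0 N Qa Qd L s U <= mpc_cost ck p x0 N Qa Qd L s V.

From HB Require Import structures.
From mathcomp Require Import all_boot all_order all_algebra.
Import Order.TTheory GRing.Theory Num.Theory.
Local Open Scope ring_scope.

(* The usual MPC recursive-feasibility argument: if U is admissible for P(t),
   then the tail U(1), ..., U(N-1) followed by the constant equilibrium input
   ubar is admissible for P(t+1).  The tail brings the state reached after
   applying U(0) to the terminal state in N-1 steps, and the terminal state is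
   a fixed point of the dynamics under ubar, so one more step keeps it there. *)

Section PredictedTrajectory.

Context {R : realFieldType} {n : nat} (ck : control_kind) (p : params R n)
  (x0 : 'cV[R]_n).

Local Notation F := (step ck p x0).
Local Notation traj := (pred_traj ck p x0).

Lemma eq_pred_traj s (U V : nat -> 'cV[R]_n) m :
  (forall k, (k < m)%N -> U k = V k) -> traj s U m = traj s V m.
Proof.
elim: m => [//|m IHm] eqUV /=.
by rewrite IHm ?eqUV // => k /ltnW; apply: eqUV.
Qed.

Lemma pred_traj_step s (U : nat -> 'cV[R]_n) m :
  traj (F s (U 0%N)) (fun k => U k.+1) m = traj s U m.+1.
Proof. by elim: m => [//|m IHm] /=; rewrite IHm. Qed.

Definition shift_input (ubar : 'cV[R]_n) (N : nat) (U : nat -> 'cV[R]_n) k :=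
  if (k.+1 < N)%N then U k.+1 else ubar.

Lemma mpc_admissible_shift C N (ubar : 'cV[R]_n) s_star s U :
  (0 < N)%N -> input_ok C x0 ubar -> F s_star ubar = s_star ->
  mpc_admissible ck p x0 C N s_star s U ->
  mpc_admissible ck p x0 C N s_star (F s (U 0%N)) (shift_input ubar N U).
Proof.
case: N => [//|N] _ ubar_ok fix_star [U_ok U_end]; split.
  by move=> k k_lt; rewrite /shift_input; case: ifP => // /U_ok.
have tail_eq k : (k < N)%N -> shift_input ubar N.+1 U k = U k.+1.
  by rewrite /shift_input ltnS => ->.
by rewrite /= (eq_pred_traj _ _ _ _ tail_eq) pred_traj_step U_end /shift_input ltnn.
Qed.

End PredictedTrajectory.

Theorem proposition3 (R : realFieldType) (n : nat) (ck : control_kind)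
    (p : params R n) (a0 d0 x0 : 'cV[R]_n) (C : R) (N : nat)
    (Qa Qd L : 'cV[R]_n) (ubar ac dc xc : 'cV[R]_n)
    (traj : nat -> state R n) :
  (0 < n)%N -> params_ok p ->
  (forall i, in01 (a0 i 0) /\ in01 (d0 i 0) /\ in01 (x0 i 0)) ->
  0 < C -> (0 < N)%N ->
  (* ubar satisfies the constraints and (ac,dc,xc) is an equilibrium under ubar *)
  input_ok C x0 ubar ->
  step ck p x0 (ac, dc, xc) ubar = (ac, dc, xc) ->
  (* closed loop: whenever P(t) is feasible, the first element of an optimal
     solution of P(t) is applied *)
  traj 0%N = (a0, d0, x0) ->
  (forall t, mpc_feasible ck p x0 C N (ac, dc, xc) (traj t) ->
     exists U, mpc_optimal ck p x0 C N Qa Qd L (ac, dc, xc) (traj t) U /\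
               traj t.+1 = step ck p x0 (traj t) (U 0%N)) ->
  mpc_feasible ck p x0 C N (ac, dc, xc) (traj 0%N) ->
  forall t, mpc_feasible ck p x0 C N (ac, dc, xc) (traj t).
Proof.
move=> _ _ _ _ N_gt0 ubar_ok fix_star _ closed_loop feasible0.
elim=> [//|t IHt].
have [U [[U_adm _] traj_next]] := closed_loop t IHt.
rewrite traj_next; exists (shift_input ubar N U).
exact: mpc_admissible_shift.
Qed.
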